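(* Let $p\ge1$, $k\ge1$, $r\in\{0,\dots,p-1\}$, $\alpha\in\mathbb R^{p\times r}$ with $\operatorname{rank}\alpha=r$, $\bar b<\infty$ and $\bar\rho<1$. Let $\mathcal B\subset\mathbb R^{kp\times[p(k-1)+r]}$ be closed with $\max_{\boldsymbol\beta\in\mathcal B}\|\boldsymbol\beta\|\le\bar b$ and $\rho_{JSR}(\{I_{p(k-1)+r}+\boldsymbol\beta^\top\boldsymbol\alpha:\boldsymbol\beta\in\mathcal B\})\le\bar\rho$. Then for every $\boldsymbol\beta\in\mathcal B$ the $kp\times kp$ matrix $\begin{bmatrix}\boldsymbol\alpha_\perp^\top\\\boldsymbol\beta^\top\end{bmatrix}$ is invertible, and $$\sup_{\boldsymbol\beta\in\mathcal B}\left\|\begin{bmatrix}\boldsymbol\alpha_\perp^\top\\\boldsymbol\beta^\top\end{bmatrix}^{-1}\right\|<\infty.$$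
   Context: $D\in\mathbb R^{p(k-1)\times p(k-1)}$ has $-I_p$ diagonal blocks, $I_p$ blocks immediately above the diagonal, zeros elsewhere (blocks empty when $k=1$); $E=(I_p,0_{p\times p(k-2)})^\top\in\mathbb R^{p(k-1)\times p}$. $\alpha_\perp$ is a $p\times(p-r)$ matrix of rank $p-r$ with $\alpha_\perp^\top\alpha=0$. $\boldsymbol\alpha=\begin{bmatrix}\alpha & E^\top\\ 0 & I_{p(k-1)}\end{bmatrix}\in\mathbb R^{kp\times[r+p(k-1)]}$ and $\boldsymbol\alpha_\perp=\begin{bmatrix}I_p\\-E\end{bmatrix}\alpha_\perp\in\mathbb R^{kp\times(p-r)}$. Joint spectral radius: $\rho_{JSR}(\mathcal A)=\limsup_{t}\sup\{\rho(M_1\cdots M_t)^{1/t}:M_s\in\mathcal A\}$, $\rho$ the spectral radius. Matrix norms are operator norms induced by the Euclidean norm. *)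

From HB Require Import structures.
From mathcomp Require Import all_boot all_order all_algebra.
From mathcomp Require Import all_classical all_reals all_analysis.
From mathcomp.real_closed Require Import complex.
Set Implicit Arguments. Unset Strict Implicit. Unset Printing Implicit Defensive.
Import Order.TTheory GRing.Theory Num.Theory.
Local Open Scope classical_set_scope.
Local Open Scope ring_scope.

Section Defs.
Variable R : realType.

Definition vnorm n (x : 'cV[R]_n) : R := Num.sqrt (\sum_i (x i ord0) ^+ 2).

Definition opnorm m n (A : 'M[R]_(m, n)) : R :=
  sup [set vnorm (A *m x) | x in [set x : 'cV[R]_n | vnorm x <= 1]].

Definition specrad n (A : 'M[R]_n) : R :=
  sup [set complex.Re `|z| | z in
        [set z : R[i] | eigenvalue (map_mx (fun x : R => (x%:C)%C) A) z]].

Definition mxprodseq n (s : seq 'M[R]_n) : 'M[R]_n :=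
  foldr (fun M acc => M *m acc) 1%:M s.

(* joint spectral radius:
   limsup_t sup { rho(M_1 ... M_t)^(1/t) : M_s in A }   (t = u.+1 >= 1) *)
Definition jsr n (A : set 'M[R]_n) : \bar R :=
  limn_esup (fun u : nat =>
    ereal_sup [set ((specrad (mxprodseq s)) `^ ((u.+1)%:R^-1))%:E
              | s in [set s : seq 'M[R]_n | size s = u.+1 /\ all (fun M => M \in A) s]]).

Definition Emx (p k : nat) : 'M[R]_(p * (k - 1), p) :=
  \matrix_(i, j) ((i : nat) == (j : nat))%:R.

(* bold alpha = [alpha E^T; 0 I] in R^{kp x (r + p(k-1))}, kp written p + p(k-1) *)
Definition balpha (p k r : nat) (alpha : 'M[R]_(p, r)) :
    'M[R]_(p + p * (k - 1), r + p * (k - 1)) :=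
  block_mx alpha (Emx p k)^T 0 1%:M.

Definition balpha_perp (p k r : nat) (alpha_perp : 'M[R]_(p, p - r)) :
    'M[R]_(p + p * (k - 1), p - r) :=
  col_mx 1%:M (- Emx p k) *m alpha_perp.

(* closedness of a set of real matrices, for the (entrywise/product = norm)
   topology of R^{m x n}; R^o is R itself seen with its canonical topology *)
Definition mxclosed m n (B : set 'M[R]_(m, n)) : Prop :=
  closed (B : set 'M[R^o]_(m, n)).

End Defs.

From HB Require Import structures.
From mathcomp Require Import all_boot all_order all_algebra.
From mathcomp Require Import all_classical all_reals all_analysis.
From mathcomp.real_closed Require Import complex.
From mathcomp Require Import fingroup perm.
Import Order.TTheory GRing.Theory Num.Theory.
Local Open Scope classical_set_scope.
Local Open Scope ring_scope.

Set Implicit Arguments. Unset Strict Implicit. Unset Printing Implicit Defensive.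

(* Write [a := balpha k alpha] and [G := beta^T *m a].  Taking constant
   products [(1 + G)^t] in the joint spectral radius shows that every
   eigenvalue of [1 + G] has modulus at most [rhobar], so every eigenvalue of
   [G] has modulus at least [1 - rhobar] and [|det G| >= (1 - rhobar)^n].  The
   entries of [G] are bounded uniformly over [B], so Cramer's rule bounds
   [G^-1] uniformly.  Since [(balpha_perp k alpha_perp)^T *m a = 0], the
   inverse of [col_mx (balpha_perp k alpha_perp)^T beta^T] is
   [row_mx ((1 - a G^-1 beta^T) Z) (a G^-1)] for a fixed right inverse [Z] of
   [(balpha_perp k alpha_perp)^T], whence the uniform bound.  All estimates go
   through the entrywise l1 norm, which is submultiplicative and equivalent to
   the operator norm. *)

Section EntrywiseNorm.
Variable C : numDomainType.

Definition mxnorm1 m n (A : 'M[C]_(m, n)) : C := \sum_i \sum_j `|A i j|.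

Lemma mxnorm1_ge0 m n (A : 'M[C]_(m, n)) : 0 <= mxnorm1 A.
Proof. by apply: sumr_ge0 => i _; apply: sumr_ge0. Qed.

Lemma ler_mxnorm1 m n (A : 'M[C]_(m, n)) i j : `|A i j| <= mxnorm1 A.
Proof.
rewrite /mxnorm1 (bigD1 i) //= (bigD1 j) //= -addrA lerDl.
by rewrite addr_ge0 ?sumr_ge0 // => l _; rewrite sumr_ge0.
Qed.

Lemma mxnorm1_le m n (A : 'M[C]_(m, n)) (K : C) :
  (forall i j, `|A i j| <= K) -> mxnorm1 A <= (m * n)%:R * K.
Proof.
move=> AK; apply: (@le_trans _ _ (\sum_(i < m) \sum_(j < n) K)).
  by apply: ler_sum => i _; apply: ler_sum.
by rewrite !sumr_const !card_ord -mulrnA mulnC mulr_natl.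
Qed.

Lemma mxnorm1M m n l (A : 'M[C]_(m, n)) (B : 'M[C]_(n, l)) :
  mxnorm1 (A *m B) <= mxnorm1 A * mxnorm1 B.
Proof.
rewrite /mxnorm1 mulr_suml; apply: ler_sum => i _.
apply: (@le_trans _ _ (\sum_j \sum_h `|A i h| * `|B h j|)).
  apply: ler_sum => j _; rewrite mxE; apply: le_trans (ler_norm_sum _ _ _) _.
  by apply: ler_sum => h _; rewrite normrM.
rewrite exchange_big mulr_suml; apply: ler_sum => h _.
rewrite -mulr_sumr ler_wpM2l // (bigD1 h) //= lerDl.
by apply: sumr_ge0 => h' _; apply: sumr_ge0.
Qed.

Lemma mxnorm1D m n (A B : 'M[C]_(m, n)) : mxnorm1 (A + B) <= mxnorm1 A + mxnorm1 B.
Proof.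
rewrite /mxnorm1 -big_split; apply: ler_sum => i _.
by rewrite -big_split; apply: ler_sum => j _; rewrite mxE ler_normD.
Qed.

Lemma mxnorm1N m n (A : 'M[C]_(m, n)) : mxnorm1 (- A) = mxnorm1 A.
Proof. by apply: eq_bigr => i _; apply: eq_bigr => j _; rewrite mxE normrN. Qed.

Lemma mxnorm1Z m n (A : 'M[C]_(m, n)) x : mxnorm1 (x *: A) = `|x| * mxnorm1 A.
Proof.
rewrite /mxnorm1 mulr_sumr; apply: eq_bigr => i _; rewrite mulr_sumr.
by apply: eq_bigr => j _; rewrite mxE normrM.
Qed.

Lemma mxnorm1_tr m n (A : 'M[C]_(m, n)) : mxnorm1 A^T = mxnorm1 A.
Proof.
rewrite /mxnorm1 exchange_big.
by apply: eq_bigr => i _; apply: eq_bigr => j _; rewrite mxE.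
Qed.

Lemma mxnorm1_row_mx m n1 n2 (A : 'M[C]_(m, n1)) (B : 'M[C]_(m, n2)) :
  mxnorm1 (row_mx A B) = mxnorm1 A + mxnorm1 B.
Proof.
rewrite /mxnorm1 -big_split; apply: eq_bigr => i _.
by rewrite big_split_ord; congr (_ + _); apply: eq_bigr => j _;
  rewrite ?row_mxEl ?row_mxEr.
Qed.

Lemma mxnorm1_1 n : mxnorm1 (1%:M : 'M[C]_n) <= (n * n)%:R.
Proof.
rewrite -[leRHS]mulr1; apply: mxnorm1_le => i j; rewrite mxE.
by case: (i == j); rewrite ?normr1 ?normr0.
Qed.

Lemma mxnorm1_gt0 m n (A : 'M[C]_(m, n)) : A != 0 -> 0 < mxnorm1 A.
Proof.
move=> A0; have /boolp.existsNP[i /boolp.existsNP[j /eqP Aij]] :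
    ~ forall i j, A i j = 0.
  by move=> A0'; move/eqP: A0; apply; apply/matrixP => i j; rewrite A0' mxE.
by apply: lt_le_trans (ler_mxnorm1 A i j); rewrite normr_gt0.
Qed.

Lemma normr_det_le n (A : 'M[C]_n) K :
  (forall i j, `|A i j| <= K) -> `|\det A| <= n`!%:R * K ^+ n.
Proof.
move=> AK; apply: le_trans (ler_norm_sum _ _ _) _.
apply: (@le_trans _ _ (\sum_(s : 'S_n) K ^+ n)); last first.
  by rewrite sumr_const card_Sn mulr_natl.
apply: ler_sum => s _; rewrite normrM normr_sign mul1r normr_prod.
rewrite -[in leRHS](card_ord n) -prodr_const.
by apply: ler_prod => i _; rewrite normr_ge0 AK.
Qed.

End EntrywiseNorm.

Lemma normr_eigenvalue_le (F : numFieldType) n (X : 'M[F]_n) z :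
  eigenvalue X z -> `|z| <= mxnorm1 X.
Proof.
move=> /eigenvalueP[v vX v0]; have v_gt0 := mxnorm1_gt0 v0.
by rewrite -(ler_pM2r v_gt0) -mxnorm1Z -vX mulrC mxnorm1M.
Qed.

Lemma normr_det_ge (F : numClosedFieldType) n (X : 'M[F]_n) c :
  0 <= c -> (forall z, eigenvalue X z -> c <= `|z|) -> c ^+ n <= `|\det X|.
Proof.
move=> c_ge0 Xc.
have [rs Xrs] := closed_field_poly_normal (char_poly X).
rewrite (monicP (char_poly_monic X)) scale1r in Xrs.
have size_rs : size rs = n.
  by have := size_char_poly X; rewrite Xrs size_prod_XsubC => -[].
have det_rs : `|\det X| = \prod_(z <- rs) `|z|.
  have := char_poly_det X; rewrite Xrs coef0_prod_XsubC size_rs.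
  move=> /(congr1 Num.norm).
  by rewrite !normrM normrX normrN1 expr1n !mul1r normr_prod.
have rs_c : forall z, z \in rs -> c <= `|z|.
  by move=> z zrs; apply: Xc; rewrite eigenvalue_root_char Xrs root_prod_XsubC.
rewrite det_rs -size_rs; elim: rs {Xrs size_rs det_rs} rs_c => [|z rs IH] rs_c.
  by rewrite big_nil expr0.
rewrite big_cons exprS ler_pM ?exprn_ge0 ?rs_c ?mem_head // IH // => w wrs.
by rewrite rs_c // inE wrs orbT.
Qed.

(* Cramer's rule, with the Leibniz bound [(n-1)! K^(n-1)] on each cofactor. *)
Definition invmx_bound (F : numFieldType) n (d K : F) : F :=
  d^-1 * ((n * n)%:R * (n.-1`!%:R * K ^+ n.-1)).

Lemma mxnorm1_invmx_le (F : numFieldType) n (A : 'M[F]_n) (d K : F) :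
  0 < d -> d <= `|\det A| -> mxnorm1 A <= K ->
  A \in unitmx /\ mxnorm1 (invmx A) <= invmx_bound n d K.
Proof.
move=> d_gt0 dA AK.
have detA_gt0 : 0 < `|\det A| := lt_le_trans d_gt0 dA.
have uA : A \in unitmx by rewrite unitmxE unitfE -normr_gt0.
split => //; rewrite /invmx uA mxnorm1Z normrV ?unitfE -?normr_gt0 //.
apply: ler_pM; rewrite ?invr_ge0 ?normr_ge0 ?mxnorm1_ge0 ?lef_pV2 ?posrE //.
apply: mxnorm1_le => i j; rewrite mxE /cofactor normrM normr_sign mul1r.
by apply: normr_det_le => i' j'; rewrite !mxE (le_trans (ler_mxnorm1 _ _ _)).
Qed.

Lemma mulmx1C_dim (R : comPzRingType) m n (e : m = n)
    (X : 'M[R]_(m, n)) (Y : 'M[R]_(n, m)) :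
  X *m Y = 1%:M -> Y *m X = 1%:M.
Proof. by case: n / e in X Y *; apply: mulmx1C. Qed.

Section BlockInverse.
Variables (F : numDomainType) (N m n : nat) (A : 'M[F]_(N, n)) (Z : 'M[F]_(N, m)).

Definition blockinv (Bt : 'M[F]_(n, N)) : 'M[F]_(N, m + n) :=
  row_mx ((1%:M - A *m invmx (Bt *m A) *m Bt) *m Z) (A *m invmx (Bt *m A)).

Lemma mul_col_blockinv (Pt : 'M[F]_(m, N)) Bt :
  Pt *m A = 0 -> Pt *m Z = 1%:M -> Bt *m A \in unitmx ->
  col_mx Pt Bt *m blockinv Bt = 1%:M.
Proof.
move=> PtA PtZ uG; rewrite mul_col_row (scalar_mx_block m n).
congr block_mx.
- by rewrite mulmxA mulmxBr mulmx1 !mulmxA PtA !mul0mx subr0.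
- by rewrite mulmxA PtA mul0mx.
- by rewrite mulmxA mulmxBr mulmx1 !mulmxA (mulmxV uG) mul1mx subrr mul0mx.
- by rewrite mulmxA (mulmxV uG).
Qed.

Lemma mxnorm1_blockinv_le Bt b c :
  mxnorm1 Bt <= b -> mxnorm1 (invmx (Bt *m A)) <= c ->
  mxnorm1 (blockinv Bt) <=
    ((N * N)%:R + mxnorm1 A * c * b) * mxnorm1 Z + mxnorm1 A * c.
Proof.
move=> Btb Gc.
have AGc : mxnorm1 (A *m invmx (Bt *m A)) <= mxnorm1 A * c.
  by apply: le_trans (mxnorm1M _ _) _; rewrite ler_wpM2l ?mxnorm1_ge0.
rewrite mxnorm1_row_mx lerD //.
apply: le_trans (mxnorm1M _ _) _; rewrite ler_wpM2r ?mxnorm1_ge0 //.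
apply: le_trans (mxnorm1D _ _) _; rewrite mxnorm1N lerD ?mxnorm1_1 //.
by apply: le_trans (mxnorm1M _ _) _; apply: ler_pM; rewrite ?mxnorm1_ge0.
Qed.

End BlockInverse.

Section OperatorNorm.
Variable R : realType.

Lemma ler_vnorm n (x : 'cV[R]_n) i : `|x i ord0| <= vnorm x.
Proof.
have sq_ge0 j : 0 <= x j ord0 ^+ 2 := sqr_ge0 _.
by rewrite /vnorm -sqrtr_sqr ler_sqrt ?sumr_ge0 // (bigD1 i) //= lerDl sumr_ge0.
Qed.

Lemma vnorm_le_mxnorm1 n (x : 'cV[R]_n) : vnorm x <= mxnorm1 x.
Proof.
rewrite /vnorm -(ger0_norm (mxnorm1_ge0 x)) -sqrtr_sqr ler_sqrt ?sqr_ge0 //.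
rewrite expr2 {1}/mxnorm1 mulr_suml; apply: ler_sum => i _.
rewrite big_ord1 -real_normK ?num_real // expr2.
by rewrite ler_wpM2l ?normr_ge0 // (ler_mxnorm1 x i ord0).
Qed.

Lemma vnorm_mulmx_le m n (A : 'M[R]_(m, n)) x :
  vnorm x <= 1 -> vnorm (A *m x) <= mxnorm1 A * n%:R.
Proof.
move=> x1; apply: le_trans (vnorm_le_mxnorm1 _) _.
apply: le_trans (mxnorm1M _ _) _; rewrite ler_wpM2l ?mxnorm1_ge0 //.
rewrite -[leRHS]mulr1 -[in leRHS](muln1 n); apply: mxnorm1_le => i j.
by rewrite (ord1 j) (le_trans (ler_vnorm x i)).
Qed.

Lemma opnorm_le_mxnorm1 m n (A : 'M[R]_(m, n)) : opnorm A <= mxnorm1 A * n%:R.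
Proof.
apply: ge_sup => [|_ [x x1 <-]]; last exact: vnorm_mulmx_le.
exists (vnorm (A *m 0)), 0 => //=.
by rewrite /vnorm big1 ?sqrtr0 ?ler01 // => i _; rewrite mxE expr0n.
Qed.

Lemma ler_opnorm m n (A : 'M[R]_(m, n)) i j : `|A i j| <= opnorm A.
Proof.
apply: (@le_trans _ _ (vnorm (col j A))).
  by have := ler_vnorm (col j A) i; rewrite mxE.
apply: ub_le_sup.
  by exists (mxnorm1 A * n%:R) => _ [x x1 <-]; apply: vnorm_mulmx_le.
exists (delta_mx j ord0); last by rewrite -colE.
rewrite /= /vnorm (bigD1 j) //= big1 ?addr0 => [|l /negbTE lj].
  by rewrite mxE !eqxx expr1n sqrtr1.
by rewrite mxE lj expr0n.
Qed.

Lemma mxnorm1_le_opnorm m n (A : 'M[R]_(m, n)) : mxnorm1 A <= (m * n)%:R * opnorm A.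
Proof. by apply: mxnorm1_le => i j; apply: ler_opnorm. Qed.

End OperatorNorm.

Section Spectrum.
Variable R : realType.
Local Notation toC := (fun x : R => (x%:C)%C).

Lemma normc_Re (z : R[i]) : `|z| = ((complex.Re `|z|)%:C)%C.
Proof. by rewrite normc_def. Qed.

Lemma eigenvalue_mxprodseq_nseq n (M : 'M[R]_n) z t :
  eigenvalue (map_mx toC M) z ->
  eigenvalue (map_mx toC (mxprodseq (nseq t M))) (z ^+ t).
Proof.
move=> /eigenvalueP[v vM v0]; apply/eigenvalueP; exists v => //.
elim: t => [|t IH] /=; first by rewrite (map_mx1 (real_complex R)) mulmx1 scale1r.
by rewrite (map_mxM (real_complex R)) mulmxA vM -scalemxAl IH scalerA exprS.
Qed.

Lemma eigenvalue_le_specrad n (M : 'M[R]_n) z :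
  eigenvalue (map_mx toC M) z -> complex.Re `|z| <= specrad M.
Proof.
move=> Mz; apply: ub_le_sup; last by exists z.
exists (complex.Re (mxnorm1 (map_mx toC M))) => _ [w Mw <-].
by have := normr_eigenvalue_le Mw; rewrite lecE => /andP[].
Qed.

Lemma eigenvalue_le_jsr n (S : set 'M[R]_n) rho M z :
  (jsr S <= rho%:E)%E -> S M -> eigenvalue (map_mx toC M) z ->
  complex.Re `|z| <= rho.
Proof.
move=> Srho SM Mz; set c := complex.Re `|z|.
have c_ge0 : 0 <= c by rewrite /c normc_def sqrtr_ge0.
rewrite -lee_fin; apply: le_trans Srho.
rewrite /jsr limn_esup_lim; apply: lime_ge; first exact: is_cvg_esups.
apply: nearW => u; set t := u.+1.
apply: (le_trans _ (ereal_sup_ubound _)); last by exists u => /=.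
apply: (le_trans _ (ereal_sup_ubound _)); last first.
  exists (nseq t M); last by [].
  by split; [rewrite size_nseq | rewrite all_nseq orbC mem_set].
have ct : complex.Re `|z ^+ t| = c ^+ t.
  by rewrite normrX normc_Re -rmorphXn.
have := eigenvalue_le_specrad (eigenvalue_mxprodseq_nseq t Mz); rewrite ct => ctS.
have c_root : c = (c ^+ t) `^ t%:R^-1.
  by rewrite -powR_mulrn // -powRrM mulfV ?powRr1 // pnatr_eq0.
rewrite lee_fin [c in c <= _]c_root ge0_ler_powR ?nnegrE ?exprn_ge0 //.
by apply: le_trans ctS; rewrite exprn_ge0.
Qed.

Lemma normr_det_ge_gap n (G : 'M[R]_n) rho : rho < 1 ->
  (forall z, eigenvalue (map_mx toC (1%:M + G)) z -> complex.Re `|z| <= rho) ->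
  (1 - rho) ^+ n <= `|\det G|.
Proof.
move=> rho_lt1 Grho; rewrite -lecR rmorphXn.
have -> : (`|\det G|%:C)%C = `|\det (map_mx toC G)|.
  by rewrite (det_map_mx (real_complex R)) normc_def /= expr0n addr0 sqrtr_sqr.
apply: normr_det_ge => [|z /eigenvalueP[v vG v0]].
  by rewrite lecR subr_ge0 ltW.
have G1z : eigenvalue (map_mx toC (1%:M + G)) (1 + z).
  apply/eigenvalueP; exists v => //.
  rewrite (map_mxD (real_complex R)) (map_mx1 (real_complex R)).
  by rewrite mulmxDr mulmx1 vG scalerDl scale1r.
have z1_rho : `|1 + z| <= (rho%:C)%C by rewrite normc_Re lecR Grho.
have := ler_normD (1 + z) (- z); rewrite addrK normrN normr1 => one_le.
by rewrite rmorphB rmorph1 lerBlDl (le_trans one_le) // lerD2r.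
Qed.

End Spectrum.

Section CompanionBlocks.
Variables (R : realType) (p k r : nat).
Variables (alpha : 'M[R]_(p, r)) (alpha_perp : 'M[R]_(p, p - r)).

Lemma balpha_perp_orth : alpha_perp^T *m alpha = 0 ->
  (balpha_perp k alpha_perp)^T *m balpha k alpha = 0.
Proof.
move=> perp_alpha; rewrite /balpha_perp /balpha trmx_mul tr_col_mx trmx1 linearN.
rewrite -mulmxA mul_row_block mul1mx mulmx0 addr0 mulmx1 mul1mx subrr.
by rewrite mul_mx_row perp_alpha mulmx0 row_mx0.
Qed.

Lemma balpha_perp_rinv : \rank alpha_perp = (p - r)%N ->
  (balpha_perp k alpha_perp)^T *m col_mx (pinvmx alpha_perp)^T 0 = 1%:M.
Proof.
move=> full_perp; have : row_full alpha_perp by rewrite /row_full full_perp.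
move=> /(submx_full 1%:M)/mulmxKpV; rewrite mul1mx => perp_pinv.
rewrite /balpha_perp trmx_mul tr_col_mx trmx1 -mulmxA mul_row_col mul1mx.
by rewrite mulmx0 addr0 -trmx_mul perp_pinv trmx1.
Qed.

End CompanionBlocks.

Unset Implicit Arguments. Set Strict Implicit.

Theorem lemmaB3 (R : realType) (p k r : nat) (hp : (1 <= p)%N) (hk : (1 <= k)%N)
    (hr : (r < p)%N)
    (alpha : 'M[R]_(p, r)) (halpha : \rank alpha = r)
    (alpha_perp : 'M[R]_(p, p - r)) (hperp_rank : \rank alpha_perp = (p - r)%N)
    (hperp_orth : alpha_perp^T *m alpha = 0)
    (bbar rhobar : R) (hrho : rhobar < 1)
    (B : set 'M[R]_(p + p * (k - 1), r + p * (k - 1)))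
    (hBclosed : mxclosed B)
    (hBbound : forall beta, B beta -> opnorm beta <= bbar)
    (hjsr : (jsr [set (1%:M + beta^T *m balpha k alpha)%R | beta in B]
              <= rhobar%:E)%E) :
  exists C : R, forall beta, B beta ->
    exists N : 'M[R]_(p + p * (k - 1), (p - r) + (r + p * (k - 1))),
      col_mx (balpha_perp k alpha_perp)^T beta^T *m N = 1%:M /\
      N *m col_mx (balpha_perp k alpha_perp)^T beta^T = 1%:M /\
      opnorm N <= C.
Proof.
set a := balpha k alpha; set n := (r + p * (k - 1))%N; set N := (p + p * (k - 1))%N.
pose Z := col_mx (pinvmx alpha_perp)^T (0 : 'M[R]_(p * (k - 1), p - r)).
pose b := (N * n)%:R * bbar.
pose c := invmx_bound n ((1 - rhobar) ^+ n) (b * mxnorm1 a).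
exists ((((N * N)%:R + mxnorm1 a * c * b) * mxnorm1 Z + mxnorm1 a * c)
        * (p - r + n)%:R).
move=> beta Bbeta.
have beta_b : mxnorm1 beta^T <= b.
  by rewrite mxnorm1_tr (le_trans (mxnorm1_le_opnorm _)) // ler_wpM2l ?hBbound.
have det_ge : (1 - rhobar) ^+ n <= `|\det (beta^T *m a)|.
  by apply: normr_det_ge_gap => // z; apply: eigenvalue_le_jsr hjsr _; exists beta.
have G_b : mxnorm1 (beta^T *m a) <= b * mxnorm1 a.
  by rewrite (le_trans (mxnorm1M _ _)) // ler_wpM2r ?mxnorm1_ge0.
have d_gt0 : 0 < (1 - rhobar) ^+ n by rewrite exprn_gt0 // subr_gt0.
have [uG Gc] := mxnorm1_invmx_le d_gt0 det_ge G_b.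
exists (blockinv a Z beta^T).
have inv_r := mul_col_blockinv (balpha_perp_orth k hperp_orth)
  (balpha_perp_rinv k hperp_rank) uG.
split; first exact: inv_r.
split; first by apply: mulmx1C_dim inv_r; rewrite addnA subnK // ltnW.
apply: le_trans (opnorm_le_mxnorm1 _) _; rewrite ler_wpM2r //.
exact: mxnorm1_blockinv_le.
Qed.
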